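(* For each integer $l\ge0$, define $$R_l(z)=2i\,p_l(z)p_l(-z)+p_l'(z)p_l(-z)+p_l'(-z)p_l(z)+2i\,z^{2l}.$$ Then $R_l(z)=0$ identically, and consequently $$G_l(z)-G_l(-z)=-2i\,z^{2l+1}\,\frac{1}{p_l(z)\,p_l(-z)}.$$
   Context: $p_l(z)=\sum_{n=0}^l\frac{i^{-n-1}}{2^{l-n}}\frac{(2l-n)!}{(l-n)!\,n!}z^n$, so that the outgoing spherical Hankel function is $h_l^{(1)}(z)=z^{-l-1}p_l(z)e^{iz}$; $p_l'$ is the derivative of $p_l$. $G_l(z)=z\,\partial h_l^{(1)}(z)/h_l^{(1)}(z)$. *)

From Stdlib Require Import Reals Factorial.
From Coquelicot Require Import Coquelicot.
Open Scope C_scope.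

Definition pcoef (l n : nat) : C :=
  Cinv (Cpow Ci (n + 1)) *
  RtoC (INR (Factorial.fact (2 * l - n)) /
        (2 ^ (l - n) * INR (Factorial.fact (l - n)) * INR (Factorial.fact n)))%R.

Definition p (l : nat) (z : C) : C :=
  sum_n (fun n => pcoef l n * Cpow z n) l.

Definition dp (l : nat) (z : C) : C :=
  sum_n (fun n => RtoC (INR n) * pcoef l n * Cpow z (n - 1)) l.

Definition Cexp (w : C) : C :=
  RtoC (exp (Re w)) * (RtoC (cos (Im w)) + Ci * RtoC (sin (Im w))).

Definition h1 (l : nat) (z : C) : C :=
  p l z * Cexp (Ci * z) / Cpow z (l + 1).

Definition Rl (l : nat) (z : C) : C :=
  2 * Ci * p l z * p l (- z) + dp l z * p l (- z) + dp l (- z) * p l z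
  + 2 * Ci * Cpow z (2 * l).

From Stdlib Require Import Reals Lra Lia.
From Coquelicot Require Import Coquelicot.
Open Scope C_scope.

(* Write p_l(z) = sum_k a_k z^k.  The ratio of consecutive coefficients gives the
   two-term recurrence (k - 2l)(k+1) a_{k+1} = 2i (l - k) a_k, which is the
   coefficient form of the differential equation of p_l.  Feeding it into the
   Cauchy products, the k-th coefficient s_k of
   2i p(z)p(-z) + p'(z)p(-z) + p'(-z)p(z) satisfies (k - 2l) s_k = 0, because
   (k - 2l) times the k-th convolution term telescopes.  Hence only s_{2l}
   survives, and it equals -2i from the leading coefficients, so R_l = 0.
   For the second claim, z h'(z)/h(z) = z p'(z)/p(z) + iz - (l+1), and the
   difference G_l(z) - G_l(-z) is R_l(z) - 2i z^{2l} divided by p(z)p(-z). *)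

Section RealTaylorBounds.
Local Open Scope R_scope.

Lemma Rabs_sub_0_le_of_derive (f df : R -> R) (M y : R) :
  (forall t, Rabs t <= Rabs y -> is_derive f t (df t) /\ Rabs (df t) <= M) ->
  Rabs (f y - f 0) <= M * Rabs y.
Proof.
  intros H. rewrite <- (Rminus_0_r y) at 2.
  apply bounded_variation with (dh := df). intros t. rewrite !Rminus_0_r. apply H.
Qed.

Lemma exp_le_exp_1 (t : R) : t <= 1 -> exp t <= exp 1.
Proof.
  intros [Ht | ->]; [apply Rlt_le, exp_increasing, Ht | apply Rle_refl].
Qed.

Lemma Rabs_exp_sub_1_le (a : R) : Rabs a <= 1 -> Rabs (exp a - 1) <= exp 1 * Rabs a.
Proof.
  intros Ha. rewrite <- exp_0 at 1.
  apply Rabs_sub_0_le_of_derive with (df := exp). intros t Ht. split.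
  - apply is_derive_exp.
  - rewrite Rabs_pos_eq by apply Rlt_le, exp_pos.
    apply exp_le_exp_1. pose proof (Rle_abs t). lra.
Qed.

Lemma Rabs_exp_sub_1_sub_le (a : R) :
  Rabs a <= 1 -> Rabs (exp a - 1 - a) <= exp 1 * (Rabs a * Rabs a).
Proof.
  intros Ha. rewrite <- Rmult_assoc.
  replace (exp a - 1 - a) with ((exp a - a) - (exp 0 - 0)) by (rewrite exp_0; ring).
  apply (Rabs_sub_0_le_of_derive (fun t => exp t - t) (fun t => exp t - 1)).
  intros t Ht. split.
  - auto_derive; auto; ring.
  - eapply Rle_trans; [apply Rabs_exp_sub_1_le; lra |].
    apply Rmult_le_compat_l; [apply Rlt_le, exp_pos | exact Ht].
Qed.

Lemma Rabs_sin_le (b : R) : Rabs (sin b) <= Rabs b.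
Proof.
  rewrite <- (Rmult_1_l (Rabs b)), <- (Rminus_0_r (sin b)), <- sin_0 at 1.
  apply Rabs_sub_0_le_of_derive with (df := cos). intros t _. split.
  - apply is_derive_sin.
  - apply Rabs_le, COS_bound.
Qed.

Lemma Rabs_cos_sub_1_le (b : R) : Rabs (cos b - 1) <= Rabs b.
Proof.
  rewrite <- (Rmult_1_l (Rabs b)), <- cos_0 at 1.
  apply Rabs_sub_0_le_of_derive with (df := fun t => - sin t). intros t _. split.
  - apply is_derive_cos.
  - rewrite Rabs_Ropp. apply Rabs_le, SIN_bound.
Qed.

Lemma Rabs_cos_sub_1_le_sqr (b : R) : Rabs (cos b - 1) <= Rabs b * Rabs b.
Proof.
  rewrite <- cos_0 at 1.
  apply Rabs_sub_0_le_of_derive with (df := fun t => - sin t). intros t Ht. split.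
  - apply is_derive_cos.
  - rewrite Rabs_Ropp. eapply Rle_trans; [apply Rabs_sin_le | exact Ht].
Qed.

Lemma Rabs_sin_sub_le_sqr (b : R) : Rabs (sin b - b) <= Rabs b * Rabs b.
Proof.
  replace (sin b - b) with ((sin b - b) - (sin 0 - 0)) by (rewrite sin_0; ring).
  apply (Rabs_sub_0_le_of_derive (fun t => sin t - t) (fun t => cos t - 1)).
  intros t Ht. split.
  - auto_derive; auto; ring.
  - eapply Rle_trans; [apply Rabs_cos_sub_1_le | exact Ht].
Qed.

End RealTaylorBounds.

Lemma Rabs_Im_le_Cmod (c : C) : (Rabs (Im c) <= Cmod c)%R.
Proof.
  pose proof (Cmod2_alt c). pose proof (Cmod_ge_0 c).
  rewrite <- (Rabs_pos_eq (Cmod c)) by lra.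
  apply Rsqr_le_abs_0. unfold Rsqr. simpl in *. nra.
Qed.

Lemma Cmod_le_Rabs_add (x y : R) : (Cmod (x, y) <= Rabs x + Rabs y)%R.
Proof.
  replace (x, y) with (RtoC x + Ci * RtoC y)
    by (unfold RtoC, Ci, Cplus, Cmult; simpl; f_equal; ring).
  eapply Rle_trans; [apply Cmod_triangle |].
  rewrite Cmod_mult, !Cmod_R, Cmod_Ci. lra.
Qed.

Lemma Cexp_pair (w : C) :
  Cexp w = (exp (Re w) * cos (Im w), exp (Re w) * sin (Im w))%R.
Proof. unfold Cexp, RtoC, Ci, Cplus, Cmult; simpl. f_equal; ring. Qed.

Lemma Cexp_add (a b : C) : Cexp (a + b) = Cexp a * Cexp b.
Proof.
  rewrite !Cexp_pair. destruct a as [a1 a2], b as [b1 b2]. simpl.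
  rewrite exp_plus, cos_plus, sin_plus. unfold Cmult; simpl. f_equal; ring.
Qed.

Lemma Cexp_0 : Cexp 0 = 1.
Proof.
  rewrite Cexp_pair. simpl. rewrite exp_0, cos_0, sin_0.
  apply injective_projections; simpl; ring.
Qed.

Lemma Cexp_neq_0 (w : C) : Cexp w <> 0.
Proof.
  intros H. apply C1_nz.
  rewrite <- Cexp_0, <- (Cplus_opp_r w), Cexp_add, H. ring.
Qed.

Lemma Cmod_Cexp_sub_1_sub_le (h : C) :
  (Cmod h < 1)%R -> (Cmod (Cexp h - 1 - h) <= 4 * exp 1 * Cmod h ^ 2)%R.
Proof.
  intros Hh. pose proof (re_le_Cmod h) as Ha. pose proof (Rabs_Im_le_Cmod h) as Hb.
  rewrite Cexp_pair. destruct h as [a b]. simpl in *.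
  set (r := Cmod (a, b)) in *.
  replace ((exp a * cos b, exp a * sin b)%R - 1 - (a, b)) with
    (((exp a - 1 - a) + exp a * (cos b - 1))%R,
     (exp a * (sin b - b) + (exp a - 1) * b)%R)
    by (unfold Cminus, Cplus, Copp, RtoC; simpl; f_equal; ring).
  eapply Rle_trans; [apply Cmod_le_Rabs_add |].
  assert (He : (0 < exp a <= exp 1)%R).
  { split; [apply exp_pos | apply exp_le_exp_1; pose proof (Rle_abs a); lra]. }
  pose proof (Rabs_exp_sub_1_sub_le a ltac:(lra)).
  pose proof (Rabs_exp_sub_1_le a ltac:(lra)).
  pose proof (Rabs_cos_sub_1_le_sqr b). pose proof (Rabs_sin_sub_le_sqr b).
  pose proof (Rabs_pos a). pose proof (Rabs_pos b). pose proof (exp_pos 1).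
  pose proof (Rabs_pos (cos b - 1)). pose proof (Rabs_pos (sin b - b)).
  pose proof (Rabs_pos (exp a - 1)).
  assert (Rabs a * Rabs a <= r ^ 2)%R by nra.
  assert (Rabs a * Rabs b <= r ^ 2)%R by nra.
  assert (Rabs b * Rabs b <= r ^ 2)%R by nra.
  assert (Rabs ((exp a - 1 - a) + exp a * (cos b - 1)) <= 2 * exp 1 * r ^ 2)%R.
  { eapply Rle_trans; [apply Rabs_triang |].
    rewrite Rabs_mult, (Rabs_pos_eq (exp a)) by lra. nra. }
  assert (Rabs (exp a * (sin b - b) + (exp a - 1) * b) <= 2 * exp 1 * r ^ 2)%R.
  { eapply Rle_trans; [apply Rabs_triang |].
    rewrite !Rabs_mult, (Rabs_pos_eq (exp a)) by lra. nra. }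
  lra.
Qed.

(* The statement of the theorem uses [C_NormedModule], the generic derivative
   lemmas use [AbsRing_NormedModule C_AbsRing]; the two are not convertible. *)
Lemma is_derive_C_to_AbsRing (f : C -> C) (x d : C) :
  @is_derive C_AbsRing C_NormedModule f x d ->
  @is_derive C_AbsRing (AbsRing_NormedModule C_AbsRing) f x d.
Proof. intros [_ H]. split; [apply is_linear_scal_l | exact H]. Qed.

Lemma is_derive_AbsRing_to_C (f : C -> C) (x d : C) :
  @is_derive C_AbsRing (AbsRing_NormedModule C_AbsRing) f x d ->
  @is_derive C_AbsRing C_NormedModule f x d.
Proof. intros [_ H]. split; [apply is_linear_scal_l | exact H]. Qed.

Lemma is_derive_of_quadratic_remainder (f : C -> C) (x d : C) (M δ : R) :
  (0 < δ)%R -> (0 <= M)%R ->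
  (forall h, (Cmod h < δ)%R -> (Cmod ((f (x + h) - f x - h * d)%C) <= M * Cmod h ^ 2)%R) ->
  is_derive f x d.
Proof.
  intros Hδ HM H. apply is_derive_AbsRing_to_C. split; [apply is_linear_scal_l |].
  intros x' Hx'.
  apply (@is_filter_lim_locally_unique C_AbsRing (AbsRing_NormedModule C_AbsRing)) in Hx'.
  subst x'.
  intros eps. apply (@locally_norm_le_locally C_AbsRing (AbsRing_NormedModule C_AbsRing)).
  assert (Hr : (0 < Rmin δ (eps / (M + 1)))%R).
  { apply Rmin_pos; [exact Hδ |]. apply Rdiv_lt_0_compat; [apply cond_pos | lra]. }
  exists (mkposreal _ Hr). intros y Hy. unfold ball_norm in Hy. simpl in Hy.
  change (norm (minus y x)) with (Cmod (y - x)) in *.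
  change (norm (minus (minus (f y) (f x)) (scal (minus y x) d)))
    with (Cmod (f y - f x - (y - x) * d)).
  change C in y. set (h := y - x) in *.
  replace y with (x + h) by (unfold h; ring).
  assert (Hδh : (Cmod h < δ)%R) by (eapply Rlt_le_trans; [exact Hy | apply Rmin_l]).
  assert (Heh : (Cmod h < eps / (M + 1))%R) by (eapply Rlt_le_trans; [exact Hy | apply Rmin_r]).
  eapply Rle_trans; [apply H, Hδh |].
  pose proof (Cmod_ge_0 h).
  assert (M * Cmod h <= eps)%R.
  { apply Rle_trans with ((M + 1) * Cmod h)%R; [nra |].
    replace (pos eps) with ((M + 1) * (eps / (M + 1)))%R by (field; lra). nra. }
  simpl. nra.
Qed.

Lemma is_derive_Cexp (w : C) : is_derive Cexp w (Cexp w).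
Proof.
  apply (is_derive_of_quadratic_remainder _ _ _ (Cmod (Cexp w) * (4 * exp 1)) 1).
  - lra.
  - pose proof (Cmod_ge_0 (Cexp w)). pose proof (exp_pos 1). nra.
  - intros h Hh.
    replace (Cexp (w + h) - Cexp w - h * Cexp w) with (Cexp w * (Cexp h - 1 - h))
      by (rewrite Cexp_add; ring).
    rewrite Cmod_mult, Rmult_assoc.
    apply Rmult_le_compat_l; [apply Cmod_ge_0 | apply Cmod_Cexp_sub_1_sub_le, Hh].
Qed.

Lemma is_derive_Cinv (w : C) : w <> 0 -> is_derive Cinv w (- / (w * w)).
Proof.
  intros Hw. assert (Hm : (0 < Cmod w)%R) by (apply Cmod_gt_0; auto).
  apply (is_derive_of_quadratic_remainder _ _ _ (2 / Cmod w ^ 3) (Cmod w / 2)).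
  - lra.
  - apply Rlt_le, Rdiv_lt_0_compat; [lra | apply pow_lt, Hm].
  - intros h Hh.
    assert (Hwh : (Cmod w / 2 <= Cmod (w + h))%R).
    { pose proof (Cmod_triangle (w + h) (- h)) as T. rewrite Cmod_opp in T.
      replace (w + h + - h) with w in T by ring. lra. }
    assert (Hnz : w + h <> 0) by (intros E; rewrite E, Cmod_0 in Hwh; lra).
    replace (/ (w + h) - / w - h * - / (w * w)) with (h * h / (w * w * (w + h)))
      by (field; auto).
    rewrite Cmod_div, !Cmod_mult by (repeat apply Cmult_neq_0; auto).
    pose proof (Cmod_ge_0 h).
    apply Rle_trans with (Cmod h * Cmod h / (Cmod w * Cmod w * (Cmod w / 2)))%R.
    + apply Rmult_le_compat_l; [nra |].
      assert (0 < Cmod w * Cmod w)%R by nra.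
      apply Rinv_le_contravar; [nra |].
      apply Rmult_le_compat_l; nra.
    + right. field. lra.
Qed.

Lemma is_derive_Cmult (f g : C -> C) (x df dg : C) :
  is_derive f x df -> is_derive g x dg ->
  is_derive (fun t => f t * g t) x (df * g x + f x * dg).
Proof.
  intros Hf Hg. apply is_derive_AbsRing_to_C.
  exact (is_derive_mult f g x df dg
           (is_derive_C_to_AbsRing _ _ _ Hf) (is_derive_C_to_AbsRing _ _ _ Hg) Cmult_comm).
Qed.

Lemma is_derive_Ccomp (f g : C -> C) (x df dg : C) :
  is_derive f (g x) df -> is_derive g x dg -> is_derive (fun t => f (g t)) x (dg * df).
Proof.
  intros Hf Hg. apply is_derive_AbsRing_to_C.
  exact (@is_derive_comp C_AbsRing (AbsRing_NormedModule C_AbsRing) f g x df dg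
           (is_derive_C_to_AbsRing _ _ _ Hf) (is_derive_C_to_AbsRing _ _ _ Hg)).
Qed.

Lemma is_derive_Cconst (c x : C) : is_derive (fun _ : C => c) x (RtoC 0).
Proof. exact (@is_derive_const C_AbsRing C_NormedModule c x). Qed.

Lemma is_derive_Cid (x : C) : is_derive (fun t : C => t) x (RtoC 1).
Proof. apply is_derive_AbsRing_to_C, (@is_derive_id C_AbsRing). Qed.

Lemma is_derive_Cpow (n : nat) (z : C) :
  is_derive (fun w => Cpow w n) z (RtoC (INR n) * Cpow z (n - 1)).
Proof.
  induction n as [| n IH].
  - replace (RtoC (INR 0) * Cpow z (0 - 1)) with (RtoC 0) by (simpl; ring).
    apply (is_derive_ext (fun _ => RtoC 1)); [reflexivity | apply is_derive_Cconst].
  - replace (RtoC (INR (S n)) * Cpow z (S n - 1))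
      with (1 * Cpow z n + z * (RtoC (INR n) * Cpow z (n - 1))).
    + apply (is_derive_Cmult (fun t => t) (fun w => Cpow w n)); [apply is_derive_Cid | exact IH].
    + destruct n as [| n]; [simpl; ring |].
      rewrite !S_INR, !RtoC_plus. simpl (S (S n) - 1)%nat. simpl (S n - 1)%nat.
      rewrite Nat.sub_0_r, Cpow_S. ring.
Qed.

Lemma sum_n_C_plus (f g : nat -> C) N :
  sum_n (fun k => f k + g k) N = sum_n f N + sum_n g N.
Proof. exact (sum_n_plus f g N). Qed.

Lemma sum_n_C_mult_l (c : C) (f : nat -> C) N :
  sum_n (fun k => c * f k) N = c * sum_n f N.
Proof. exact (@sum_n_mult_l C_Ring c f N). Qed.

Lemma sum_n_C_ext (f g : nat -> C) N :
  (forall k, (k <= N)%nat -> f k = g k) -> sum_n f N = sum_n g N.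
Proof. apply sum_n_ext_loc. Qed.

Lemma sum_n_C_mult_r (c : C) (f : nat -> C) N :
  (sum_n (fun k => f k * c) N : C) = sum_n f N * c.
Proof.
  rewrite (sum_n_C_ext _ (fun k => c * f k)) by (intros; ring).
  rewrite sum_n_C_mult_l. ring.
Qed.

Lemma sum_n_C_Sn (f : nat -> C) N : sum_n f (S N) = sum_n f N + f (S N).
Proof. exact (sum_Sn f N). Qed.

Lemma sum_n_C_O (f : nat -> C) : sum_n f 0 = f O.
Proof. exact (sum_O f). Qed.

Lemma sum_n_C_eq_0 (f : nat -> C) N :
  (forall k, (k <= N)%nat -> f k = 0) -> (sum_n f N : C) = 0.
Proof.
  induction N as [| N IH]; intros H; [rewrite sum_n_C_O; apply H; lia |].
  rewrite sum_n_C_Sn, IH, H by (try intros; try apply H; lia). ring.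
Qed.

Lemma sum_n_C_single (f : nat -> C) N m : (m <= N)%nat ->
  (forall k, (k <= N)%nat -> k <> m -> f k = 0) -> (sum_n f N : C) = f m.
Proof.
  induction N as [| N IH]; intros Hm H.
  - rewrite sum_n_C_O. replace m with O by lia. reflexivity.
  - rewrite sum_n_C_Sn. destruct (Nat.eq_dec m (S N)) as [-> | Hne].
    + rewrite sum_n_C_eq_0 by (intros; apply H; lia). ring.
    + rewrite IH, (H (S N)) by (try intros; try apply H; lia). ring.
Qed.

Lemma sum_n_C_shift (f : nat -> C) N :
  (sum_n f (S N) : C) = f O + sum_n (fun k => f (S k)) N.
Proof.
  induction N as [| N IH]; [rewrite sum_n_C_Sn, !sum_n_C_O; reflexivity |].
  rewrite sum_n_C_Sn, IH, sum_n_C_Sn. ring.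
Qed.

Lemma sum_n_C_telescope (G : nat -> C) N :
  (sum_n (fun j => G (S j) - G j) N : C) = G (S N) - G O.
Proof.
  induction N as [| N IH]; [rewrite sum_n_C_O; reflexivity |].
  rewrite sum_n_C_Sn, IH. ring.
Qed.

Definition cpoly (a : nat -> C) (N : nat) (z : C) : C := sum_n (fun k => a k * Cpow z k) N.

Definition conv (a b : nat -> C) (k : nat) : C := sum_n (fun j => a j * b (k - j)%nat) k.

Lemma cpoly_trunc (a : nat -> C) l N z : (l <= N)%nat ->
  (forall k, (l < k)%nat -> a k = 0) -> cpoly a N z = cpoly a l z.
Proof.
  intros H Ha. induction H as [| N HlN IH]; [reflexivity |].
  unfold cpoly in *. rewrite sum_n_C_Sn, IH, Ha by lia. ring.
Qed.

Lemma sum_conv_eq (a b : nat -> C) z M :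
  (sum_n (fun k => conv a b k * Cpow z k) M : C) =
  sum_n (fun j => a j * Cpow z j * cpoly b (M - j) z) M.
Proof.
  induction M as [| M IH].
  - rewrite !sum_n_C_O. unfold conv, cpoly. rewrite !sum_n_C_O. simpl. ring.
  - rewrite sum_n_C_Sn, IH, sum_n_C_Sn, Nat.sub_diag.
    rewrite (sum_n_C_ext (fun j => a j * Cpow z j * cpoly b (S M - j) z)
      (fun j => a j * Cpow z j * cpoly b (M - j) z + a j * b (S M - j)%nat * Cpow z (S M))).
    2:{ intros k Hk. replace (S M - k)%nat with (S (M - k)) by lia.
        unfold cpoly. rewrite sum_n_C_Sn.
        replace (Cpow z (S M)) with (Cpow z k * Cpow z (S (M - k)))
          by (rewrite <- Cpow_add_r; f_equal; lia).
        ring. }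
    rewrite sum_n_C_plus. unfold conv, cpoly. rewrite sum_n_C_Sn, Nat.sub_diag, sum_n_C_mult_r, !sum_n_C_O.
    simpl. ring.
Qed.

Lemma cpoly_mult (a b : nat -> C) l z :
  (forall k, (l < k)%nat -> a k = 0) -> (forall k, (l < k)%nat -> b k = 0) ->
  cpoly a l z * cpoly b l z = sum_n (fun k => conv a b k * Cpow z k) (2 * l).
Proof.
  intros Ha Hb. rewrite sum_conv_eq.
  rewrite (sum_n_C_ext _ (fun j => cpoly b l z * (a j * Cpow z j))).
  - rewrite sum_n_C_mult_l. fold (cpoly a (2 * l) z).
    rewrite (cpoly_trunc a l (2 * l)) by (auto; lia). ring.
  - intros k Hk. destruct (Compare_dec.le_lt_dec k l).
    + rewrite (cpoly_trunc b l) by (auto; lia). ring.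
    + rewrite Ha by lia. ring.
Qed.

Lemma Ceq_of_lin_comb (x y u v w : C) : u = v -> x - y = w * (u - v) -> x = y.
Proof. intros -> E. apply Ceq_minus. rewrite E. ring. Qed.

Lemma Ceq_of_lin_comb2 (x y u1 v1 u2 v2 w1 w2 : C) : u1 = v1 -> u2 = v2 ->
  x - y = w1 * (u1 - v1) + w2 * (u2 - v2) -> x = y.
Proof. intros -> -> E. apply Ceq_minus. rewrite E. ring. Qed.

(* The real factor of [pcoef]: the coefficients of the reverse Bessel polynomial. *)
Definition rbessel_coef (l n : nat) : R :=
  (INR (Factorial.fact (2 * l - n)) /
     (2 ^ (l - n) * INR (Factorial.fact (l - n)) * INR (Factorial.fact n)))%R.

Lemma rbessel_coef_succ k m : let l := (k + 1 + m)%nat in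
  ((2 * INR l - INR k) * INR (S k) * rbessel_coef l (S k)
   = 2 * (INR l - INR k) * rbessel_coef l k)%R.
Proof.
  intros l. unfold rbessel_coef, l.
  replace (2 * (k + 1 + m) - S k)%nat with (k + 1 + 2 * m)%nat by lia.
  replace (2 * (k + 1 + m) - k)%nat with (S (k + 1 + 2 * m)) by lia.
  replace (k + 1 + m - S k)%nat with m by lia.
  replace (k + 1 + m - k)%nat with (S m) by lia.
  rewrite !fact_simpl, !mult_INR. simpl pow.
  pose proof (INR_fact_neq_0 (k + 1 + 2 * m)). pose proof (INR_fact_neq_0 m).
  pose proof (INR_fact_neq_0 k). pose proof (pow_lt 2 m ltac:(lra)).
  pose proof (pos_INR k). pose proof (pos_INR m).
  rewrite !S_INR, !plus_INR, !mult_INR. simpl (INR 1). simpl (INR 2).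
  field. repeat split; lra.
Qed.

Lemma rbessel_coef_diag l : rbessel_coef l l = 1%R.
Proof.
  unfold rbessel_coef. replace (2 * l - l)%nat with l by lia. rewrite Nat.sub_diag.
  pose proof (INR_fact_neq_0 l). simpl. field. exact H.
Qed.

Lemma Cinv_Ci : / Ci = - Ci.
Proof. unfold Cinv, Ci, Copp; simpl. apply injective_projections; simpl; field. Qed.

Lemma Ci_sqr : Ci * Ci = -1.
Proof. unfold Ci, Cmult, Copp; simpl. apply injective_projections; simpl; ring. Qed.

Lemma Cpow_opp (z : C) k : Cpow (- z) k = Cpow (-1) k * Cpow z k.
Proof. rewrite <- Cpow_mult_l. f_equal. ring. Qed.

(* Coefficient sequences, extended by zero beyond degree l, of p_l(z), p_l(-z)
   and of their derivatives with respect to z. *)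
Definition coef_p (l k : nat) : C := if (k <=? l)%nat then pcoef l k else 0.
Definition coef_pm (l k : nat) : C := Cpow (-1) k * coef_p l k.
Definition coef_dp (l k : nat) : C := RtoC (INR (S k)) * coef_p l (S k).
Definition coef_dpm (l k : nat) : C := RtoC (INR (S k)) * coef_pm l (S k).

Lemma coef_p_gt l k : (l < k)%nat -> coef_p l k = 0.
Proof. intros H. unfold coef_p. destruct (Nat.leb_spec k l); [lia | reflexivity]. Qed.

Lemma coef_p_le l k : (k <= l)%nat -> coef_p l k = pcoef l k.
Proof. intros H. unfold coef_p. destruct (Nat.leb_spec k l); [reflexivity | lia]. Qed.

Lemma coef_pm_gt l k : (l < k)%nat -> coef_pm l k = 0.
Proof. intros H. unfold coef_pm. rewrite coef_p_gt by exact H. ring. Qed.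

Lemma coef_dp_ge l k : (l <= k)%nat -> coef_dp l k = 0.
Proof. intros H. unfold coef_dp. rewrite coef_p_gt by lia. ring. Qed.

Lemma coef_dpm_ge l k : (l <= k)%nat -> coef_dpm l k = 0.
Proof. intros H. unfold coef_dpm. rewrite coef_pm_gt by lia. ring. Qed.

Lemma coef_dp_rec l k :
  RtoC (INR k - 2 * INR l) * coef_dp l k = 2 * Ci * RtoC (INR l - INR k) * coef_p l k.
Proof.
  unfold coef_dp. destruct (Compare_dec.le_lt_dec (S k) l) as [Hk | Hk].
  - rewrite !coef_p_le by lia. unfold pcoef. fold (rbessel_coef l (S k)) (rbessel_coef l k).
    pose proof (rbessel_coef_succ k (l - k - 1)) as H. cbv zeta in H.
    replace (k + 1 + (l - k - 1))%nat with l in H by lia.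
    apply (f_equal RtoC) in H. rewrite !RtoC_mult, !RtoC_minus, !RtoC_mult in H.
    replace (S k + 1)%nat with (S (k + 1)) by lia. rewrite Cpow_S.
    assert (Hc : Cpow Ci (k + 1) <> 0) by apply Cpow_nz, Ci_nz.
    replace (/ (Ci * Cpow Ci (k + 1))) with (- Ci * / Cpow Ci (k + 1))
      by (rewrite <- Cinv_Ci; field; split; [exact Hc | apply Ci_nz]).
    rewrite !RtoC_minus, !RtoC_mult.
    apply (Ceq_of_lin_comb _ _ _ _ (Ci * / Cpow Ci (k + 1)) H). ring.
  - rewrite (coef_p_gt l (S k)) by lia. destruct (Nat.eq_dec k l) as [-> | Hne].
    + rewrite Rminus_eq_0. ring.
    + rewrite coef_p_gt by lia. ring.
Qed.

Lemma coef_dpm_rec l k :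
  RtoC (INR k - 2 * INR l) * coef_dpm l k
  = - (2 * Ci * RtoC (INR l - INR k)) * coef_pm l k.
Proof.
  unfold coef_dpm, coef_pm. pose proof (coef_dp_rec l k) as H. unfold coef_dp in H.
  rewrite Cpow_S.
  transitivity (- Cpow (-1) k * (RtoC (INR k - 2 * INR l) * (RtoC (INR (S k)) * coef_p l (S k)))).
  - ring.
  - rewrite H. ring.
Qed.

(* k-th coefficient of R_l(z) - 2i z^{2l}. *)
Definition coef_W (l k : nat) : C :=
  conv (coef_dp l) (coef_pm l) k - conv (coef_p l) (coef_dpm l) k
  + 2 * Ci * conv (coef_p l) (coef_pm l) k.

Lemma coef_W_term l j m :
  RtoC (INR (j + m) - 2 * INR l) *
    (coef_dp l j * coef_pm l m - coef_p l j * coef_dpm l m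
     + 2 * Ci * coef_p l j * coef_pm l m)
  = RtoC (INR m) * coef_dp l j * coef_pm l m - RtoC (INR j) * coef_p l j * coef_dpm l m.
Proof.
  pose proof (coef_dp_rec l j) as HA. pose proof (coef_dpm_rec l m) as HB.
  rewrite plus_INR. rewrite !RtoC_minus, !RtoC_plus, !RtoC_mult in *.
  apply (Ceq_of_lin_comb2 _ _ _ _ _ _ (coef_pm l m) (- coef_p l j) HA HB). ring.
Qed.

(* By [coef_W_term], (k - 2l) times the j-th convolution term is G (j+1) - G j. *)
Lemma coef_W_mul l k : RtoC (INR k - 2 * INR l) * coef_W l k = 0.
Proof.
  set (c := RtoC (INR k - 2 * INR l)).
  set (G := fun j => RtoC (INR j) * coef_p l j * RtoC (INR (S k - j)) * coef_pm l (S k - j)%nat).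
  transitivity (sum_n (fun j => G (S j) - G j) k).
  - transitivity (sum_n (fun j => c * (coef_dp l j * coef_pm l (k - j)%nat)
                   + - c * (coef_p l j * coef_dpm l (k - j)%nat)
                   + c * (2 * Ci) * (coef_p l j * coef_pm l (k - j)%nat)) k).
    + unfold coef_W, conv. rewrite !sum_n_C_plus, !sum_n_C_mult_l. ring.
    + apply sum_n_C_ext. intros j Hj. unfold c.
      replace (INR k) with (INR (j + (k - j))) by (f_equal; lia).
      transitivity (RtoC (INR (j + (k - j)) - 2 * INR l) *
        (coef_dp l j * coef_pm l (k - j) - coef_p l j * coef_dpm l (k - j)
         + 2 * Ci * coef_p l j * coef_pm l (k - j))); [ring |].
      rewrite coef_W_term. unfold G, coef_dp, coef_dpm.
      replace (S k - S j)%nat with (k - j)%nat by lia.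
      replace (S k - j)%nat with (S (k - j)) by lia. ring.
  - rewrite sum_n_C_telescope. unfold G. rewrite Nat.sub_diag. simpl INR. ring.
Qed.

Lemma coef_W_neq l k : k <> (2 * l)%nat -> coef_W l k = 0.
Proof.
  intros Hk. pose proof (coef_W_mul l k) as H.
  assert (Hc : RtoC (INR k - 2 * INR l) <> 0).
  { intros E. apply RtoC_inj in E. apply Hk, INR_eq. rewrite mult_INR. simpl (INR 2). lra. }
  rewrite <- (Cmult_1_l (coef_W l k)), <- (Cinv_l _ Hc), <- Cmult_assoc, H. ring.
Qed.

Lemma coef_W_top l : coef_W l (2 * l) = - (2 * Ci).
Proof.
  unfold coef_W, conv.
  rewrite (sum_n_C_eq_0 (fun j => coef_dp l j * coef_pm l (2 * l - j))).
  2:{ intros j Hj. destruct (Compare_dec.le_lt_dec l j).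
      - rewrite coef_dp_ge by lia. ring.
      - rewrite coef_pm_gt by lia. ring. }
  rewrite (sum_n_C_eq_0 (fun j => coef_p l j * coef_dpm l (2 * l - j))).
  2:{ intros j Hj. destruct (Compare_dec.le_lt_dec j l).
      - rewrite coef_dpm_ge by lia. ring.
      - rewrite coef_p_gt by lia. ring. }
  rewrite (sum_n_C_single _ (2 * l) l) by
    (first [lia | intros j _ Hne; destruct (Compare_dec.le_lt_dec j l);
     [rewrite coef_pm_gt by lia | rewrite coef_p_gt by lia]; ring]).
  unfold coef_pm. replace (2 * l - l)%nat with l by lia.
  rewrite coef_p_le by lia. unfold pcoef. fold (rbessel_coef l l). rewrite rbessel_coef_diag.
  assert (Hu : Cpow (-1) l * Cpow (-1) l = 1).
  { rewrite <- Cpow_mult_l. replace (-1 * -1) with (RtoC 1) by ring. apply Cpow_1_l. }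
  assert (Hc : Cpow Ci (l + 1) * Cpow Ci (l + 1) = - Cpow (-1) l).
  { rewrite <- Cpow_mult_l, Ci_sqr, Nat.add_1_r, Cpow_S. ring. }
  assert (Hu0 : Cpow (-1) l <> 0)
    by (intros E; rewrite E in Hu; apply C1_nz; rewrite <- Hu; ring).
  assert (Hc0 : Cpow Ci (l + 1) <> 0) by apply Cpow_nz, Ci_nz.
  replace (2 * Ci * (/ Cpow Ci (l + 1) * RtoC 1 * (Cpow (-1) l * (/ Cpow Ci (l + 1) * RtoC 1))))
    with (2 * Ci * Cpow (-1) l / (Cpow Ci (l + 1) * Cpow Ci (l + 1))) by (field; auto).
  rewrite Hc. field. exact Hu0.
Qed.

Lemma p_eq_cpoly l z : p l z = cpoly (coef_p l) l z.
Proof. apply sum_n_C_ext. intros k Hk. rewrite coef_p_le; auto. Qed.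

Lemma p_opp_eq_cpoly l z : p l (- z) = cpoly (coef_pm l) l z.
Proof.
  apply sum_n_C_ext. intros k Hk. unfold coef_pm. rewrite coef_p_le, Cpow_opp by auto. ring.
Qed.

Lemma dp_eq_sum l w :
  dp l w = sum_n (fun k => RtoC (INR (S k)) * coef_p l (S k) * Cpow w k) l.
Proof.
  transitivity (sum_n (fun n => RtoC (INR n) * coef_p l n * Cpow w (n - 1)) (S l)).
  - rewrite sum_n_C_Sn, (coef_p_gt l (S l)) by lia.
    rewrite Cmult_0_r, Cmult_0_l, Cplus_0_r.
    apply sum_n_C_ext. intros k Hk. rewrite coef_p_le; auto.
  - rewrite sum_n_C_shift. simpl (INR 0). rewrite !Cmult_0_l, Cplus_0_l.
    apply sum_n_C_ext. intros k _. simpl (S k - 1)%nat. rewrite Nat.sub_0_r. reflexivity.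
Qed.

Lemma dp_eq_cpoly l z : dp l z = cpoly (coef_dp l) l z.
Proof. rewrite dp_eq_sum. reflexivity. Qed.

Lemma dp_opp_eq_cpoly l z : dp l (- z) = - cpoly (coef_dpm l) l z.
Proof.
  rewrite dp_eq_sum. unfold cpoly, coef_dpm, coef_pm.
  replace (- sum_n _ l) with (- (1) * sum_n (fun k => RtoC (INR (S k)) * (Cpow (-1) (S k) * coef_p l (S k)) * Cpow z k) l)
    by ring.
  rewrite <- sum_n_C_mult_l.
  apply sum_n_C_ext. intros k _. rewrite Cpow_opp, Cpow_S. ring.
Qed.

Lemma Rl_eq_sum l z :
  Rl l z = sum_n (fun k => coef_W l k * Cpow z k) (2 * l) + 2 * Ci * Cpow z (2 * l).
Proof.
  unfold Rl. rewrite p_eq_cpoly, p_opp_eq_cpoly, dp_eq_cpoly, dp_opp_eq_cpoly.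
  transitivity (cpoly (coef_dp l) l z * cpoly (coef_pm l) l z
                - cpoly (coef_p l) l z * cpoly (coef_dpm l) l z
                + 2 * Ci * (cpoly (coef_p l) l z * cpoly (coef_pm l) l z)
                + 2 * Ci * Cpow z (2 * l)); [ring |].
  rewrite !cpoly_mult by (intros; first [apply coef_p_gt | apply coef_pm_gt
                                        | apply coef_dp_ge | apply coef_dpm_ge]; lia).
  f_equal. unfold coef_W.
  set (A := fun k => conv (coef_dp l) (coef_pm l) k * Cpow z k).
  set (B := fun k => conv (coef_p l) (coef_dpm l) k * Cpow z k).
  set (P := fun k => conv (coef_p l) (coef_pm l) k * Cpow z k).
  transitivity (sum_n A (2 * l) + - (1) * sum_n B (2 * l) + 2 * Ci * sum_n P (2 * l)); [ring |].
  rewrite <- !sum_n_C_mult_l, <- !sum_n_C_plus.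
  apply sum_n_C_ext. intros. unfold A, B, P. ring.
Qed.

Lemma Rl_eq_0 l z : Rl l z = 0.
Proof.
  rewrite Rl_eq_sum, sum_n_C_single with (m := (2 * l)%nat), coef_W_top by
    (try lia; intros k _ Hk; rewrite coef_W_neq by exact Hk; ring).
  ring.
Qed.

Lemma is_derive_p (l : nat) (z : C) : is_derive (p l) z (dp l z).
Proof.
  replace (dp l z) with (sum_n (fun k => pcoef l k * (RtoC (INR k) * Cpow z (k - 1))) l)
    by (apply sum_n_C_ext; intros; ring).
  apply (is_derive_sum_n (fun k y => pcoef l k * Cpow y k)). intros k _.
  replace (pcoef l k * (RtoC (INR k) * Cpow z (k - 1)))
    with (0 * Cpow z k + pcoef l k * (RtoC (INR k) * Cpow z (k - 1))) by ring.
  apply (is_derive_Cmult (fun _ => pcoef l k) (fun y => Cpow y k));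
    [apply is_derive_Cconst | apply is_derive_Cpow].
Qed.

Definition dh1 (l : nat) (z : C) : C :=
  (dp l z * Cexp (Ci * z) + p l z * (Ci * Cexp (Ci * z))) * / Cpow z (l + 1)
  + p l z * Cexp (Ci * z)
    * (RtoC (INR (l + 1)) * Cpow z l * - / (Cpow z (l + 1) * Cpow z (l + 1))).

Lemma is_derive_h1 (l : nat) (z : C) : z <> 0 -> is_derive (h1 l) z (dh1 l z).
Proof.
  intros Hz.
  assert (HE : is_derive (fun w => Cexp (Ci * w)) z (Ci * Cexp (Ci * z))).
  { replace (Ci * Cexp (Ci * z)) with ((0 * z + Ci * 1) * Cexp (Ci * z)) by ring.
    apply (is_derive_Ccomp Cexp (fun w => Ci * w)); [apply is_derive_Cexp |].
    apply (is_derive_Cmult (fun _ => Ci) (fun w => w));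
      [apply is_derive_Cconst | apply is_derive_Cid]. }
  assert (HI : is_derive (fun w => / Cpow w (l + 1)) z
                 (RtoC (INR (l + 1)) * Cpow z l * - / (Cpow z (l + 1) * Cpow z (l + 1)))).
  { replace l with (l + 1 - 1)%nat at 2 by lia.
    apply (is_derive_Ccomp Cinv (fun w => Cpow w (l + 1)));
      [apply is_derive_Cinv, Cpow_nz, Hz | apply is_derive_Cpow]. }
  apply (is_derive_Cmult (fun w => p l w * Cexp (Ci * w)) (fun w => / Cpow w (l + 1)));
    [| exact HI].
  apply (is_derive_Cmult (p l) (fun w => Cexp (Ci * w))); [apply is_derive_p | exact HE].
Qed.

Lemma z_dh1_div_h1 (l : nat) (w : C) : w <> 0 -> p l w <> 0 ->
  w * dh1 l w / h1 l w = w * dp l w / p l w + Ci * w - RtoC (INR (l + 1)).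
Proof.
  intros Hw Hp. unfold dh1, h1.
  pose proof (Cexp_neq_0 (Ci * w)).
  assert (Cpow w l <> 0) by (apply Cpow_nz, Hw).
  replace (Cpow w (l + 1)) with (w * Cpow w l) by (rewrite Nat.add_1_r; reflexivity).
  field. repeat split; auto.
Qed.

Theorem lemma8p4 (l : nat) :
  (forall z : C, Rl l z = 0) /\
  (forall z : C, z <> 0 -> p l z <> 0 -> p l (- z) <> 0 ->
     exists d1 d2 : C,
       is_derive (h1 l) z d1 /\ is_derive (h1 l) (- z) d2 /\
       z * d1 / h1 l z - (- z) * d2 / h1 l (- z)
       = - (2 * Ci) * Cpow z (2 * l + 1) / (p l z * p l (- z))).
Proof.
  split; [apply Rl_eq_0 |].
  intros z Hz Hp Hm.
  assert (Hz' : - z <> 0) by (intros E; apply Hz; replace z with (- - z) by ring; rewrite E; ring).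
  exists (dh1 l z), (dh1 l (- z)).
  split; [apply is_derive_h1, Hz |]. split; [apply is_derive_h1, Hz' |].
  rewrite !z_dh1_div_h1 by assumption.
  replace (Cpow z (2 * l + 1)) with (z * Cpow z (2 * l)) by (rewrite Nat.add_1_r; reflexivity).
  pose proof (Rl_eq_0 l z) as HR. unfold Rl in HR.
  apply (Ceq_of_lin_comb _ _ _ _ (z / (p l z * p l (- z))) HR).
  field. split; assumption.
Qed.
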